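(* Let $p$ be a prime and let $G\le S_p$ with $p\mid|G|$. Then for every $1\ne g\in G$: (a) if $p\nmid|g|$ then $p\mid|G:C_G(g)|$; (b) if $p\mid|g|$ then $|C_G(g)|=p$; (c) if $|G:C_G(g)|<p$, then $G$ has a unique Sylow $p$-subgroup $P$ and $g\in P$; moreover, if $G\ne P$, then $G$ is a Frobenius group with kernel $P$ and a Frobenius complement of order $r$ dividing $p-1$, and in this case $P$ is the Frattini subgroup of $G$; (d) $|G:C_G(g)|\ne 2(p-1)$.
   Context: $|g|$ denotes the order of $g$.
   Formalization: In part (c), when G ≠ P, P is the Fitting subgroup of G in place of the Frattini subgroup of G. The statement above fails without it. *)

From mathcomp Require Import all_boot all_fingroup all_solvable.
Set Implicit Arguments.
Unset Strict Implicit.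
Unset Printing Implicit Defensive.

From mathcomp Require Import all_boot all_fingroup all_solvable zify.
Set Implicit Arguments. Unset Strict Implicit. Unset Printing Implicit Defensive.

(* An element x of order p in S_p is a p-cycle: <[x]> is transitive and
   abelian, hence its own centraliser.  So every g with p | #[g] has order p
   and 'C_G[g] = <[g]>, while a nontrivial p'-element centralises no element
   of order p, whence (a).  If p does not divide #|G : 'C_G[g]|, then <[g]> is
   a Sylow subgroup, and the number of Sylow subgroups, being 1 mod p and a
   divisor of the index, is 1 when the index is < p or 2(p-1) with p > 3.  A
   normal <[g]> is a self-centralising Frobenius kernel, and the class of g
   lies in <[g]>^#, so the index is at most p-1, excluding 2(p-1). *)

Lemma dvdn_double_pred_mod1 p n : 4 < p -> n %% p = 1 -> n %| 2 * p.-1 -> n = 1.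
Proof.
move=> p_gt4 n_mod /dvdnP [k def2p]; rewrite (divn_eq n p) n_mod in def2p *.
case: (n %/ p) def2p => [|q] //; case: k => [|[|k]] /= def2p.
- lia.
- by case: q def2p => [|q] /=; nia.
- nia.
Qed.

Lemma prime_gt4_of_fact_bound p : prime p -> 4 * p.-1 <= p`! -> 4 < p.
Proof. by case: p => [|[|[|[|[|p]]]]]. Qed.

Local Open Scope group_scope.

Section GroupFacts.
Variable gT : finGroupType.
Implicit Types (G P : {group gT}) (g : gT).

Lemma card_Syl_dvd_index_cent1 p G g :
  p.-Sylow(G) <[g]> -> (#|'Syl_p(G)| %| #|G : 'C_G[g]|)%N.
Proof.
by move=> sylP; rewrite (card_Syl sylP) indexgS // setIS //= -cent_cycle cent_sub.
Qed.

Lemma card_Syl1_normal p G P : p.-Sylow(G) P -> #|'Syl_p(G)| = 1%N -> P <| G.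
Proof.
move=> sylP; rewrite (card_Syl sylP) => /(index1g (subsetIl _ _)) defN.
by rewrite /normal (pHall_sub sylP) -defN subsetIr.
Qed.

Lemma index_cent1_normal_cycle G g :
  g != 1 -> G \subset 'N(<[g]>) -> (#|G : 'C_G[g]| <= #[g].-1)%N.
Proof.
move=> ntg nGg; rewrite index_cent1 orderE (cardsD1 1 <[g]>) group1 /=.
apply: subset_leq_card; apply/subsetP => _ /imsetP[h Gh ->].
by rewrite !inE conjg_eq1 ntg memJ_norm ?cycle_id ?(subsetP nGg).
Qed.

Lemma Fitting_selfcent_normal_Sylow p G P :
  p.-Sylow(G) P -> P <| G -> 'C_G(P) \subset P -> 'F(G) = P.
Proof.
move=> sylP nsPG sCP; have [sPG nPG] := andP nsPG.
have [sNG nNG] := andP (pcore_normal p^' G).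
have tiNP : 'O_p^'(G) :&: P = 1.
  rewrite coprime_TIg // coprime_sym.
  exact: pnat_coprime (pHall_pgroup sylP) (pcore_pgroup _ _).
have cNP : 'O_p^'(G) \subset 'C(P).
  apply/commG1P/trivgP; rewrite -tiNP commg_subI // subsetI subxx.
    exact: subset_trans sNG nPG.
  exact: subset_trans sPG nNG.
have N1 : 'O_p^'(G) = 1.
  by apply/trivgP; rewrite -tiNP subsetI subxx (subset_trans _ sCP) // subsetI sNG.
by rewrite (Fitting_eq_pcore N1) (normal_Hall_pcore sylP nsPG).
Qed.

End GroupFacts.

Section PrimeDegree.
Variable T : finType.
Implicit Types (A : {group {perm T}}) (x g : {perm T}).

Lemma cent_abelian_orbitT A i :
  abelian A -> orbit 'P A i = [set: T] -> 'C(A) \subset A.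
Proof.
move=> cAA orbT; have transA k : exists2 y, y \in A & y i = k.
  have : k \in orbit 'P A i by rewrite orbT inE.
  by case/orbitP => y Ay <-; exists y.
apply/subsetP => c cAc; have [y Ay yi] := transA (c i).
suff -> : c = y by [].
apply/permP => k; have [z Az <-] := transA k.
by rewrite -permM -(centP cAc z Az) permM -yi -permM (centsP cAA y Ay z Az) permM.
Qed.

Lemma card_perm_group_le A : (#|A| <= #|T|`!)%N.
Proof.
by rewrite -cardsT -card_perm; apply/subset_leq_card/subsetP => s _; apply/subsetP.
Qed.

Variable p : nat.
Hypotheses (T_card : #|T| = p) (p_prime : prime p).

Lemma orbit_cycle_prime_order x i :
  #[x] = p -> x i != i -> orbit 'P <[x]> i = [set: T].
Proof.
move=> ox xi; apply/eqP; rewrite eqEcard subsetT cardsT T_card.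
have orb_dvd_p : (#|orbit 'P <[x]> i| %| p)%N.
  by rewrite card_orbit -ox orderE dvdn_indexg.
have orb_gt1 : (1 < #|orbit 'P <[x]> i|)%N.
  rewrite (cardsD1 i) orbit_refl add1n ltnS card_gt0; apply/set0Pn.
  by exists (x i); rewrite !inE xi (mem_orbit 'P i (cycle_id x)).
by rewrite (prime_nt_dvdP p_prime _ orb_dvd_p) ?leqnn // gtn_eqF.
Qed.

Lemma cent1_perm_prime_order x : #[x] = p -> 'C[x] = <[x]>.
Proof.
move=> ox; have [i xi] : exists i, x i != i.
  apply/existsP; apply: contraTT (prime_gt1 p_prime) => /existsPn fixx.
  rewrite -ox; suff -> : x = 1 by rewrite order1.
  by apply/permP => j; rewrite perm1; apply/eqP/negbNE.
apply/eqP; rewrite eqEsubset cycle_subG cent1id andbT -cent_cycle.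
exact: cent_abelian_orbitT (cycle_abelian x) (orbit_cycle_prime_order ox xi).
Qed.

Lemma order_perm_p_elt g : (p %| #[g])%N -> #[g] = p.
Proof.
move=> p_dvd_g; apply/eqP; rewrite eqn_dvd p_dvd_g andbT.
have [x gx ox] := Cauchy p_prime p_dvd_g.
have : g \in 'C[x] by rewrite cent1C -cent_cycle (subsetP (cycle_abelian g)).
by rewrite cent1_perm_prime_order // -ox; apply: order_dvdG.
Qed.

Lemma cent1_perm_p_elt g : (p %| #[g])%N -> 'C[g] = <[g]>.
Proof. by move/order_perm_p_elt; apply: cent1_perm_prime_order. Qed.

Lemma cent1_perm_p'elt g :
  g != 1 -> ~~ (p %| #[g])%N -> ~~ (p %| #|'C[g]|)%N.
Proof.
move=> ntg; apply: contra => /(Cauchy p_prime)[x gCx ox].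
rewrite cent1C cent1_perm_prime_order // in gCx.
have /(prime_nt_dvdP p_prime) <- // : (#[g] %| p)%N by rewrite -ox order_dvdG.
by rewrite order_eq1.
Qed.

Variable G : {group {perm T}}.

Lemma subcent1_perm_p_elt g : g \in G -> (p %| #[g])%N -> 'C_G[g] = <[g]>.
Proof. by move=> Gg /cent1_perm_p_elt ->; apply/setIidPr; rewrite cycle_subG. Qed.

Lemma p_dvd_index_cent1_perm g :
  (p %| #|G|)%N -> g != 1 -> ~~ (p %| #[g])%N -> (p %| #|G : 'C_G[g]|)%N.
Proof.
move=> pG ntg p'g; move: pG; rewrite -(Lagrange (subsetIl G 'C[g])) Euclid_dvdM //.
case/orP=> // pC; case/negP: (cent1_perm_p'elt ntg p'g).
exact: dvdn_trans pC (cardSg (subsetIr _ _)).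
Qed.

Lemma Sylow_cycle_perm g :
  g \in G -> (p %| #[g])%N -> ~~ (p %| #|G : 'C_G[g]|)%N -> p.-Sylow(G) <[g]>.
Proof.
move=> Gg pg; rewrite subcent1_perm_p_elt // => p'idx.
by rewrite /pHall cycle_subG Gg /pgroup -orderE (order_perm_p_elt pg) pnat_id //= p'natE.
Qed.

Lemma Frobenius_ker_cycle_perm g :
  #[g] = p -> <[g]> <| G -> G :!=: <[g]> -> [Frobenius G with kernel <[g]>].
Proof.
move=> og nsPG neGP; apply/Frobenius_kerP; split => //.
- by rewrite cycle_eq1 -order_eq1 og gtn_eqF ?prime_gt1.
- by rewrite properEneq eq_sym neGP (normal_sub nsPG).
move=> x /setD1P[ntx Px]; rewrite (subset_trans (subsetIr _ _)) //.
have ox : #[x] = p.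
  by apply/(prime_nt_dvdP p_prime); rewrite ?order_eq1 // -og order_dvdG.
by rewrite cent1_perm_prime_order // cycle_subG.
Qed.

Lemma index_cent1_perm_neq_double_pred g :
  (p %| #|G|)%N -> g \in G -> g != 1 -> #|G : 'C_G[g]| != (2 * p.-1)%N.
Proof.
move=> pG Gg ntg; apply/eqP => idx_eq.
have p_gt4 : (4 < p)%N.
  apply: prime_gt4_of_fact_bound => //; rewrite -[4]/(2 * 2)%N -mulnA -idx_eq -T_card.
  have C_gt1 : (1 < #|'C_G[g]|)%N.
    have sPC : <[g]> \subset 'C_G[g] by rewrite cycle_subG inE Gg cent1id.
    by rewrite (leq_trans _ (subset_leq_card sPC)) ?order_gt1.
  rewrite (leq_trans (leq_mul C_gt1 (leqnn _))) // Lagrange ?subsetIl //.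
  exact: card_perm_group_le.
have p'idx : ~~ (p %| #|G : 'C_G[g]|)%N.
  rewrite idx_eq Euclid_dvdM // !gtnNdvd //; lia.
have pg : (p %| #[g])%N by apply: contraR p'idx; apply: p_dvd_index_cent1_perm.
have sylP := Sylow_cycle_perm Gg pg p'idx.
have nSyl1 : #|'Syl_p(G)| = 1%N.
  apply: dvdn_double_pred_mod1 p_gt4 (card_Syl_mod _ p_prime) _.
  by rewrite -idx_eq card_Syl_dvd_index_cent1.
have := index_cent1_normal_cycle ntg (normal_norm (card_Syl1_normal sylP nSyl1)).
rewrite idx_eq order_perm_p_elt //; lia.
Qed.

End PrimeDegree.

Theorem lemma4p1 (p : nat) (G : {group 'S_p}) :
  prime p -> (p %| #|G|)%N ->
  forall g : 'S_p, g \in G -> g != 1 ->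
  [/\ ~~ (p %| #[g])%N -> (p %| #|G : 'C_G[g]|)%N,
      (p %| #[g])%N -> #|'C_G[g]| = p,
      (#|G : 'C_G[g]| < p)%N ->
        exists P : {group 'S_p},
          [/\ 'Syl_p(G) = [set P], g \in P &
              G :!=: P ->
                (exists H : {group 'S_p},
                   [Frobenius G = P ><| H] /\ (#|H| %| p.-1)%N)
                /\ 'F(G) = P]
    & #|G : 'C_G[g]| != (2 * p.-1)%N].
Proof.
move=> p_prime pG g Gg ntg; have T_card := card_ord p.
have p_dvd_idx := p_dvd_index_cent1_perm T_card p_prime pG ntg.
split=> //; last exact: index_cent1_perm_neq_double_pred.
  by move=> pg; rewrite (subcent1_perm_p_elt T_card) // -orderE (order_perm_p_elt T_card).
move=> idx_lt; have p'idx : ~~ (p %| #|G : 'C_G[g]|)%N by rewrite gtnNdvd.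
have pg : (p %| #[g])%N by apply: contraR p'idx.
have og := order_perm_p_elt T_card p_prime pg.
have sylP := Sylow_cycle_perm T_card p_prime Gg pg p'idx.
have nSyl1 : #|'Syl_p(G)| = 1%N.
  have := card_Syl_mod G p_prime; rewrite modn_small // (leq_ltn_trans _ idx_lt) //.
  exact: dvdn_leq (card_Syl_dvd_index_cent1 sylP).
have nsPG := card_Syl1_normal sylP nSyl1.
exists <[g]>%G; split; [|exact: cycle_id|move=> neGP; split].
- by apply/eqP; rewrite eq_sym eqEcard sub1set inE sylP cards1 nSyl1.
- have /existsP[H frobH] := Frobenius_ker_cycle_perm T_card p_prime og nsPG neGP.
  by exists H; split=> //; have := Frobenius_dvd_ker1 frobH; rewrite -orderE og.
apply: Fitting_selfcent_normal_Sylow sylP nsPG _.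
by rewrite cent_cycle (subcent1_perm_p_elt T_card).
Qed.
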